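(* Let $\tilde n$ be a set of names and $\mathtt{s}\in\tilde n$. Let $M$ be a ground term public with respect to $\tilde n$, and let $U,V$ be terms such that for every occurrence $q_{\mathtt{s}}$ of $\mathtt{s}$ in $U$ (respectively in $V$) there is an encryption occurrence $q_{\mathsf{enc}}$ in $U$ (respectively in $V$) with $q_{\mathsf{enc}}\cdot1\le q_{\mathtt{s}}$ which is an agent encryption with respect to $\tilde n\setminus\{\mathtt{s}\}$ and a probabilistic encryption with respect to $\{U,V\}$. Then $U[\mathtt{s}/M]=V[\mathtt{s}/M]$ (syntactic equality) implies $U=V$.
   Context: Terms are built over function symbols including $\mathsf{enc}$ and $\mathsf{enca}$ (arity 3) and $\mathsf{priv}$, constants, names and variables. A term is public w.r.t. a set of names $\tilde n$ if it contains no name of $\tilde n$ and no symbol $\mathsf{priv}$. Positions are sequences of positive integers ordered by prefix $\le$; $T|_p$ is the subterm at $p$; $T[\mathtt{s}/M]$ replaces every occurrence of the name $\mathtt{s}$ by $M$. An encryption occurrence in $U$ is a position $q$ where the head of $U|_q$ is $\mathsf{enc}$ or $\mathsf{enca}$; it is an agent encryption w.r.t. a set of names $\tilde m$ if $U|_{q\cdot3}\in\tilde m$; it is a probabilistic encryption w.r.t. a set of terms $S$ if for all $W\in S$ and positions $p$ with $W|_p=U|_{q\cdot3}$ we have $p=q'\cdot3$ for some $q'$ with $W|_{q'}=U|_q$. *)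

From Stdlib Require Import List Arith.
Import ListNotations.

Definition name := nat.
Definition var := nat.

Inductive fsym : Type :=
| Enc : fsym
| Enca : fsym
| Priv : fsym
| Other : nat -> nat -> fsym. (* Other id arity; constants have arity 0 *)

Definition arity (f : fsym) : nat :=
  match f with
  | Enc => 3
  | Enca => 3
  | Priv => 1
  | Other _ k => k
  end.

Inductive term : Type :=
| Name : name -> term
| Var : var -> term
| Fn : fsym -> list term -> term.

Fixpoint wf (t : term) : Prop :=
  match t with
  | Name _ | Var _ => True
  | Fn f args => length args = arity f /\
      (fix wfl (l : list term) : Prop :=
         match l with [] => True | u :: l' => wf u /\ wfl l' end) args
  end.

Fixpoint has_name (n : name) (t : term) : Prop :=
  match t with
  | Name m => m = n
  | Var _ => False
  | Fn _ args =>
      (fix hl (l : list term) : Prop :=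
         match l with [] => False | u :: l' => has_name n u \/ hl l' end) args
  end.

Fixpoint has_var (t : term) : Prop :=
  match t with
  | Name _ => False
  | Var _ => True
  | Fn _ args =>
      (fix hl (l : list term) : Prop :=
         match l with [] => False | u :: l' => has_var u \/ hl l' end) args
  end.

Fixpoint has_priv (t : term) : Prop :=
  match t with
  | Name _ | Var _ => False
  | Fn f args => f = Priv \/
      (fix hl (l : list term) : Prop :=
         match l with [] => False | u :: l' => has_priv u \/ hl l' end) args
  end.

Definition ground (t : term) : Prop := ~ has_var t.

Definition public (ns : name -> Prop) (t : term) : Prop :=
  (forall n, ns n -> ~ has_name n t) /\ ~ has_priv t.

(* positions: sequences of positive integers; argument i is the i-th (1-based) *)
Definition position := list nat.

Definition prefix (p q : position) : Prop := exists r, q = p ++ r.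

Fixpoint subterm (t : term) (p : position) : option term :=
  match p with
  | [] => Some t
  | i :: p' =>
      match t with
      | Fn _ args =>
          match i with
          | 0 => None
          | S j => match nth_error args j with
                   | Some u => subterm u p'
                   | None => None
                   end
          end
      | _ => None
      end
  end.

Fixpoint subst_name (s : name) (M : term) (t : term) : term :=
  match t with
  | Name n => if Nat.eqb n s then M else Name n
  | Var x => Var x
  | Fn f args => Fn f (map (subst_name s M) args)
  end.

Definition is_enc_sym (f : fsym) : Prop := f = Enc \/ f = Enca.

Definition enc_occ (U : term) (q : position) : Prop :=
  exists f args, subterm U q = Some (Fn f args) /\ is_enc_sym f.

Definition agent_enc (ms : name -> Prop) (U : term) (q : position) : Prop :=
  exists n, subterm U (q ++ [3]) = Some (Name n) /\ ms n.

Definition prob_enc (S : term -> Prop) (U : term) (q : position) : Prop :=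
  forall r, subterm U (q ++ [3]) = Some r ->
  forall W p, S W -> subterm W p = Some r ->
  exists q', p = q' ++ [3] /\ subterm W q' = subterm U q.

Definition s_protected (ns : name -> Prop) (s : name) (U V : term) : Prop :=
  forall qs, subterm U qs = Some (Name s) ->
  exists qe, enc_occ U qe /\ prefix (qe ++ [1]) qs /\
    agent_enc (fun n => ns n /\ n <> s) U qe /\
    prob_enc (fun W => W = U \/ W = V) U qe.

(* If U <> V while U[s/M] = V[s/M], the two terms differ at a position p where
   one of them, say U, has s and the other does not.  The encryption protecting
   that occurrence of s in U has an agent key n <> s at q.3; since M is public
   it cannot contain n, so n also sits at q.3 in V.  Probabilistic encryption
   then forces V|q = U|q, hence V|p = U|p = s, a contradiction. *)
From Stdlib Require Import List Arith.
Import ListNotations.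

Lemma term_ind' (P : term -> Prop) :
  (forall n, P (Name n)) -> (forall x, P (Var x)) ->
  (forall f args, Forall P args -> P (Fn f args)) -> forall t, P t.
Proof.
  intros HN HV HF. fix IH 1. intros [n | x | f args].
  - apply HN.
  - apply HV.
  - apply HF. induction args as [| a l IHl]; constructor; [apply IH | exact IHl].
Qed.

Lemma subterm_app t p q :
  subterm t (p ++ q) =
  match subterm t p with Some u => subterm u q | None => None end.
Proof.
  revert t; induction p as [| i p IH]; intros t; simpl; auto.
  destruct t as [| | f args]; auto. destruct i as [| j]; auto.
  destruct (nth_error args j); auto.
Qed.

Lemma has_name_Fn n f args u :
  In u args -> has_name n u -> has_name n (Fn f args).
Proof.
  intros Hin Hu. simpl. induction args as [| a l IH]; [destruct Hin |].
  destruct Hin as [-> | Hin]; [left; exact Hu | right; exact (IH Hin)].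
Qed.

Lemma has_name_subterm n t q : subterm t q = Some (Name n) -> has_name n t.
Proof.
  revert t; induction q as [| i q IH]; intros t Ht; simpl in Ht.
  - injection Ht as ->. reflexivity.
  - destruct t as [| | f args]; try discriminate. destruct i as [| j]; try discriminate.
    destruct (nth_error args j) as [u |] eqn:Hj; try discriminate.
    apply has_name_Fn with u; [exact (nth_error_In _ _ Hj) | exact (IH u Ht)].
Qed.

Section SubstName.

Variables (s : name) (M : term).

Local Notation sub := (subst_name s M).

Lemma subst_name_other n : n <> s -> sub (Name n) = Name n.
Proof. intros Hn. simpl. destruct (Nat.eqb_spec n s); congruence. Qed.

Lemma subst_name_eq_Name v n :
  n <> s -> ~ has_name n M -> sub v = Name n -> v = Name n.
Proof.
  intros Hn HM Hv. destruct v as [m | x | f args]; simpl in Hv; try discriminate.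
  destruct (Nat.eqb_spec m s); [| congruence].
  exfalso. apply HM. rewrite Hv. reflexivity.
Qed.

Lemma subterm_subst t q v : subterm t q = Some v -> subterm (sub t) q = Some (sub v).
Proof.
  revert t; induction q as [| i q IH]; intros t Ht; simpl in *.
  - congruence.
  - destruct t as [| | f args]; try discriminate. destruct i as [| j]; try discriminate.
    simpl. rewrite nth_error_map.
    destruct (nth_error args j); [exact (IH _ Ht) | discriminate].
Qed.

Lemma subterm_subst_inv t q w :
  subterm (sub t) q = Some w ->
  (exists v, subterm t q = Some v /\ sub v = w) \/
  (exists q1 q2, q = q1 ++ q2 /\ subterm t q1 = Some (Name s) /\ subterm M q2 = Some w).
Proof.
  revert t; induction q as [| i q IH]; intros t Ht.
  - left. exists t. simpl in *. split; congruence.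
  - destruct t as [m | x | f args].
    + simpl in Ht. destruct (Nat.eqb_spec m s) as [Hm | Hm]; [subst m | discriminate].
      right. exists [], (i :: q). auto.
    + discriminate.
    + destruct i as [| j]; [discriminate |]. simpl in Ht |- *.
      rewrite nth_error_map in Ht.
      destruct (nth_error args j) as [u |] eqn:Hj; [| discriminate].
      destruct (IH u Ht) as [Hv | (q1 & q2 & -> & Hq1 & Hq2)]; [left; exact Hv |].
      right. exists (S j :: q1), q2. simpl. rewrite Hj. auto.
Qed.

Definition s_mismatch (U V : term) (p : position) : Prop :=
  subterm U p = Some (Name s) /\ exists t, subterm V p = Some t /\ t <> Name s.

Definition s_mismatch_either (U V : term) : Prop :=
  exists p, s_mismatch U V p \/ s_mismatch V U p.

Lemma s_mismatch_root U : U <> Name s -> s_mismatch (Name s) U [].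
Proof. intros HU. split; [reflexivity | exists U; auto]. Qed.

Lemma s_mismatch_either_Fn f g args args' j a b :
  nth_error args j = Some a -> nth_error args' j = Some b ->
  s_mismatch_either a b -> s_mismatch_either (Fn f args) (Fn g args').
Proof.
  intros Ha Hb [p Hp]. exists (S j :: p). unfold s_mismatch; simpl.
  rewrite Ha, Hb. exact Hp.
Qed.

Lemma subst_name_list_eq_or_mismatch (args args' : list term) :
  Forall (fun a => forall b, sub a = sub b -> a = b \/ s_mismatch_either a b) args ->
  map sub args = map sub args' ->
  args = args' \/ exists j a b, nth_error args j = Some a /\
                   nth_error args' j = Some b /\ s_mismatch_either a b.
Proof.
  revert args'; induction args as [| a l IH]; intros [| b l'] HF Heq; try discriminate.
  - left. reflexivity.
  - injection Heq as Hab Hl. inversion HF as [| ? ? Ha Hl']; subst.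
    destruct (Ha b Hab) as [<- | Hm].
    + destruct (IH l' Hl' Hl) as [<- | (j & x & y & Hx & Hy & Hm)]; [left; reflexivity |].
      right. exists (S j), x, y. auto.
    + right. exists 0, a, b. auto.
Qed.

Lemma Name_s_dec t : {t = Name s} + {t <> Name s}.
Proof.
  destruct t as [n | x | f args]; try (right; discriminate).
  destruct (Nat.eq_dec n s) as [Hn | Hn]; [left; congruence | right; congruence].
Qed.

Lemma Name_s_eq_or_mismatch U V :
  U = Name s \/ V = Name s -> U = V \/ s_mismatch_either U V.
Proof.
  intros Hs. destruct (Name_s_dec U) as [HU | HU], (Name_s_dec V) as [HV | HV].
  - left. congruence.
  - right. exists []. left. subst U. exact (s_mismatch_root V HV).
  - right. exists []. right. subst V. exact (s_mismatch_root U HU).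
  - exfalso. tauto.
Qed.

Lemma subst_name_eq_or_mismatch U V :
  sub U = sub V -> U = V \/ s_mismatch_either U V.
Proof.
  revert V; induction U as [n | x | f args IH] using term_ind'; intros V Hsub;
    destruct (Name_s_dec V) as [HV | HV]; try (apply Name_s_eq_or_mismatch; right; exact HV).
  - destruct (Nat.eq_dec n s) as [Hn | Hn]; [apply Name_s_eq_or_mismatch; left; congruence |].
    rewrite subst_name_other in Hsub by exact Hn.
    destruct V as [m | |]; simpl in Hsub; try discriminate.
    destruct (Nat.eqb_spec m s); [congruence | left; congruence].
  - destruct V as [m | |]; simpl in Hsub; try discriminate.
    + destruct (Nat.eqb_spec m s); [congruence | discriminate].
    + left. congruence.
  - destruct V as [m | | g args']; simpl in Hsub; try discriminate.
    + destruct (Nat.eqb_spec m s); [congruence | discriminate].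
    + injection Hsub as <- Hargs.
      destruct (subst_name_list_eq_or_mismatch args args' IH Hargs)
        as [<- | (j & a & b & Ha & Hb & Hm)]; [left; reflexivity |].
      right. exact (s_mismatch_either_Fn f f _ _ j a b Ha Hb Hm).
Qed.

Lemma s_protected_no_mismatch ns U V p :
  public ns M -> s_protected ns s U V -> sub U = sub V -> ~ s_mismatch U V p.
Proof.
  intros [HM _] Hprot Hsub [HUp (t & HVp & Ht)].
  destruct (Hprot p HUp) as (qe & _ & [r ->] & (n & HUkey & Hns & Hn) & Hprob).
  assert (HVkey : subterm V (qe ++ [3]) = Some (Name n)).
  { pose proof (subterm_subst U _ _ HUkey) as Hkey.
    rewrite subst_name_other, Hsub in Hkey by exact Hn.
    destruct (subterm_subst_inv V _ _ Hkey) as [(v & Hv & Hsv) | (q1 & q2 & _ & _ & Hq2)].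
    - rewrite Hv. f_equal. exact (subst_name_eq_Name v n Hn (HM n Hns) Hsv).
    - exfalso. exact (HM n Hns (has_name_subterm n M q2 Hq2)). }
  destruct (Hprob _ HUkey V _ (or_intror eq_refl) HVkey) as (q' & Hq & HVq).
  apply app_inj_tail in Hq as [<- _].
  rewrite <- app_assoc, subterm_app in HUp, HVp. rewrite HVq in HVp.
  congruence.
Qed.

End SubstName.

Theorem lemma2p13 (ns : name -> Prop) (s : name) (M U V : term) :
  ns s ->
  wf M -> wf U -> wf V ->
  ground M -> public ns M ->
  s_protected ns s U V ->
  s_protected ns s V U ->
  subst_name s M U = subst_name s M V -> U = V.
Proof.
  intros _ _ _ _ _ HM HUV HVU Hsub.
  destruct (subst_name_eq_or_mismatch s M U V Hsub) as [HUV' | [p [Hm | Hm]]].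
  - exact HUV'.
  - destruct (s_protected_no_mismatch s M ns U V p HM HUV Hsub Hm).
  - destruct (s_protected_no_mismatch s M ns V U p HM HVU (eq_sym Hsub) Hm).
Qed.
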